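(* Let $G$ be a group and $f$ a circular homogeneous quasimorphism on $G$. (i) There exists a left-invariant total order $\preceq$ on $G$ such that the growth functions of the order induced by $\preceq$ via the left action of $G$ on itself are multiples of $f$. (ii) There exists a quasi-total triple $(G,\preceq_0,T)$ realizing $f$ such that $\preceq_0$ can be refined to a left-invariant total order $\preceq$ on $G$. (iii) If $f$ is unbounded on the center of $G$, then there exists a total triple $(G,\preceq,T)$ realizing $f$.
   Context: ${\rm Homeo}^+_{\mathbb{Z}}(\mathbb{R})$ denotes the group of orientation-preserving homeomorphisms of $\mathbb{R}$ commuting with $x\mapsto x+1$, and $T_{\mathbb{R}}(\phi)=\lim_{n\to\infty}\frac{\phi^n(0)}{n}$ is the translation number on it. A nonzero homogeneous quasimorphism $f$ on $G$ is circular if there is an injective homomorphism $\phi:G\to{\rm Homeo}^+_{\mathbb{Z}}(\mathbb{R})$ with $f=T_{\mathbb{R}}\circ\phi$. For a poset $(X,\preceq)$, an order-preserving bijection $T$ is dominant if for all $a,b$ some $n\in\mathbb{N}$ has $T^na\succ b$; $(X,\preceq,T)$ is a quasi-total triple if $T$ is dominant and for some $N\in\mathbb{N}$, for all $a,b$ there is $k\in\{0,\dots,N\}$ with $a\preceq T^kb$ or $b\preceq T^ka$; it is a total triple if moreover $\preceq$ is total. Given a group action on a poset $(X,\preceq)$, the induced order on $G$ is $g\leq h\Leftrightarrow\forall k\in G\,\forall x:(kg).x\preceq(kh).x$; for a bi-invariant order $\leq$ and a dominant $g$ ($g\geq e$, $g\ne e$, every $h$ has $g^n\geq h$ for some $n\geq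 0$), the growth function is $\gamma_g(h)=\lim_n\frac1n\inf\{p\in\mathbb{Z}:g^p\geq h^n\}$. A triple $(G,\preceq,T)$ realizes $f$ if the left multiplication action of $G$ on $G$ is by order-preserving maps commuting with $T$, effective and dominating (some $g,x,n\in\mathbb{N}$ with $gx\succeq T^nx$), and the growth functions of the induced order on $G$ are multiples of $f$. A refinement of a partial order $\preceq_0$ is a partial order $\preceq$ with $a\preceq_0 b\Rightarrow a\preceq b$. *)

From Stdlib Require Import Reals ZArith.
Open Scope R_scope.

Definition is_group {G : Type} (mul : G -> G -> G) (e : G) (inv : G -> G) : Prop :=
  (forall x y z, mul x (mul y z) = mul (mul x y) z) /\
  (forall x, mul e x = x) /\ (forall x, mul x e = x) /\
  (forall x, mul (inv x) x = e) /\ (forall x, mul x (inv x) = e).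

Definition npow {G : Type} (mul : G -> G -> G) (e : G) (g : G) (n : nat) : G :=
  Nat.iter n (mul g) e.

Definition zpow {G : Type} (mul : G -> G -> G) (e : G) (inv : G -> G) (g : G) (z : Z) : G :=
  match z with
  | Z0 => e
  | Zpos p => npow mul e g (Pos.to_nat p)
  | Zneg p => npow mul e (inv g) (Pos.to_nat p)
  end.

Definition central {G : Type} (mul : G -> G -> G) (z : G) : Prop :=
  forall g, mul z g = mul g z.

Definition homogeneous_quasimorphism {G : Type} (mul : G -> G -> G) (e : G)
  (inv : G -> G) (f : G -> R) : Prop :=
  (exists D : R, forall g h, Rabs (f (mul g h) - f g - f h) <= D) /\
  (forall g (z : Z), f (zpow mul e inv g z) = IZR z * f g).

Definition homeo_plus_Z (phi : R -> R) : Prop :=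
  (forall x, continuity_pt phi x) /\
  (exists psi : R -> R, (forall x, psi (phi x) = x) /\ (forall x, phi (psi x) = x) /\
                        (forall x, continuity_pt psi x)) /\
  (forall x y, x < y -> phi x < phi y) /\
  (forall x, phi (x + 1) = phi x + 1).

Definition translation_number (phi : R -> R) (t : R) : Prop :=
  Un_cv (fun n => Nat.iter n phi 0 / INR n) t.

Definition circular {G : Type} (mul : G -> G -> G) (e : G) (inv : G -> G)
  (f : G -> R) : Prop :=
  homogeneous_quasimorphism mul e inv f /\
  (exists g, f g <> 0) /\
  exists phi : G -> R -> R,
    (forall g, homeo_plus_Z (phi g)) /\
    (forall g h x, phi (mul g h) x = phi g (phi h x)) /\
    (forall g h, (forall x, phi g x = phi h x) -> g = h) /\
    (forall g, translation_number (phi g) (f g)).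

Definition partial_order {X : Type} (le : X -> X -> Prop) : Prop :=
  (forall a, le a a) /\ (forall a b, le a b -> le b a -> a = b) /\
  (forall a b c, le a b -> le b c -> le a c).

Definition total {X : Type} (le : X -> X -> Prop) : Prop :=
  forall a b, le a b \/ le b a.

Definition order_preserving_bij {X : Type} (le : X -> X -> Prop) (T : X -> X) : Prop :=
  (forall a b, le a b -> le (T a) (T b)) /\
  (exists Ti : X -> X, (forall x, Ti (T x) = x) /\ (forall x, T (Ti x) = x)).

(** N = {1,2,...}; "T^n a ≻ b" means b ⪯ T^n a and b <> T^n a *)
Definition dominant {X : Type} (le : X -> X -> Prop) (T : X -> X) : Prop :=
  order_preserving_bij le T /\
  forall a b, exists n : nat, (1 <= n)%nat /\ le b (Nat.iter n T a) /\ b <> Nat.iter n T a.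

Definition quasi_total_triple {X : Type} (le : X -> X -> Prop) (T : X -> X) : Prop :=
  partial_order le /\ dominant le T /\
  exists N : nat, (1 <= N)%nat /\
    forall a b, exists k : nat, (k <= N)%nat /\
      (le a (Nat.iter k T b) \/ le b (Nat.iter k T a)).

Definition total_triple {X : Type} (le : X -> X -> Prop) (T : X -> X) : Prop :=
  quasi_total_triple le T /\ total le.

Definition left_invariant {G : Type} (mul : G -> G -> G) (le : G -> G -> Prop) : Prop :=
  forall k x y, le x y -> le (mul k x) (mul k y).

Definition refines {X : Type} (le0 le : X -> X -> Prop) : Prop :=
  forall a b, le0 a b -> le a b.

(** Order on G induced by the left multiplication action of G on (G, le):
    g <= h  iff  forall k x, (k g).x ⪯ (k h).x *)
Definition induced_le {G : Type} (mul : G -> G -> G) (le : G -> G -> Prop)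
  (g h : G) : Prop :=
  forall k x, le (mul (mul k g) x) (mul (mul k h) x).

(** [rel a b] reads "a <= b"; g dominant: g >= e, g <> e, forall h exists n >= 0, g^n >= h *)
Definition dominant_elt {G : Type} (mul : G -> G -> G) (e : G)
  (rel : G -> G -> Prop) (g : G) : Prop :=
  rel e g /\ g <> e /\ forall h, exists n : nat, rel h (npow mul e g n).

(** [growth_fn ... g h l] : gamma_g(h) = lim_n (1/n) inf{p in Z | g^p >= h^n} = l
    (the infimum being attained, as a minimum of integers) *)
Definition growth_fn {G : Type} (mul : G -> G -> G) (e : G) (inv : G -> G)
  (rel : G -> G -> Prop) (g h : G) (l : R) : Prop :=
  exists p : nat -> Z,
    (forall n, rel (npow mul e h n) (zpow mul e inv g (p n)) /\
               forall q : Z, rel (npow mul e h n) (zpow mul e inv g q) -> (p n <= q)%Z) /\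
    Un_cv (fun n => IZR (p n) / INR n) l.

Definition growth_multiples_of {G : Type} (mul : G -> G -> G) (e : G) (inv : G -> G)
  (rel : G -> G -> Prop) (f : G -> R) : Prop :=
  forall g, dominant_elt mul e rel g ->
    exists c : R, forall h, growth_fn mul e inv rel g h (c * f h).

Definition realizes {G : Type} (mul : G -> G -> G) (e : G) (inv : G -> G)
  (le : G -> G -> Prop) (T : G -> G) (f : G -> R) : Prop :=
  (forall g x y, le x y -> le (mul g x) (mul g y)) /\
  (forall g x, T (mul g x) = mul g (T x)) /\
  (forall g, (forall x, mul g x = x) -> g = e) /\
  (exists g x (n : nat), (1 <= n)%nat /\ le (Nat.iter n T x) (mul g x)) /\
  growth_multiples_of mul e inv (induced_le mul le) f.

(* Through [phi], each [u] acts by a lift of a circle homeomorphism with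
   [|phi u x - x - f u| <= 1]. Hence "[phi u < phi v] everywhere" compares
   elements through [f] up to a bounded error, and every partial order extending
   it has growth functions proportional to [f]. The lexicographic order of the
   values at an enumeration of the rationals is such an extension; it is total
   because continuous maps are determined on a dense set, and left-invariant
   because the action is by increasing maps. Right multiplication by [t] with
   [f t] large commutes with the left action and dominates the order; when [t]
   is central it also preserves the lexicographic order. *)

From Stdlib Require Import Reals ZArith Lra Lia Classical ClassicalEpsilon Wf_nat Cantor.
Open Scope R_scope.

Lemma Un_cv_bounds (u : nat -> R) l a b :
  Un_cv u l -> (forall n, (1 <= n)%nat -> a <= u n <= b) -> a <= l <= b.
Proof.
  intros Hcv Hab.
  assert (Hnear : forall eps, 0 < eps -> a - eps < l < b + eps).
  { intros eps Heps. destruct (Hcv eps Heps) as [N HN].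
    specialize (HN (S N) ltac:(lia)). specialize (Hab (S N) ltac:(lia)).
    unfold Rdist in HN. apply Rabs_def2 in HN. lra. }
  split; apply Rnot_lt_le; intro Hlt.
  - specialize (Hnear (a - l)). lra.
  - specialize (Hnear (l - b)). lra.
Qed.

Section LiftOfCircleMap.

Variable F : R -> R.
Hypothesis F_incr : forall x y, x < y -> F x < F y.
Hypothesis F_shift1 : forall x, F (x + 1) = F x + 1.

Lemma shift_commute_nat (n : nat) x : F (x + INR n) = F x + INR n.
Proof.
  induction n as [|n IH]; [simpl; rewrite !Rplus_0_r; reflexivity|].
  rewrite S_INR, <- Rplus_assoc, F_shift1, IH. ring.
Qed.

Lemma shift_commute_int (m : Z) x : F (x + IZR m) = F x + IZR m.
Proof.
  destruct (Z_le_gt_dec 0 m) as [Hm | Hm].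
  - rewrite <- (Z2Nat.id m), <- INR_IZR_INZ by exact Hm. apply shift_commute_nat.
  - pose proof (shift_commute_nat (Z.to_nat (- m)) (x + IZR m)) as H.
    rewrite INR_IZR_INZ, Z2Nat.id, opp_IZR in H by lia.
    replace (x + IZR m + - IZR m) with x in H by ring. lra.
Qed.

(* Compare [x] with [y + m], [m = floor (x - y)], and shift back by [m]. *)
Lemma displacement_lt_succ x y : F x - x < F y - y + 1.
Proof.
  pose proof (Zfloor_bound (x - y)) as [Hlo Hhi].
  assert (Hlt : x < y + IZR (Zfloor (x - y)) + 1) by lra.
  pose proof (F_incr _ _ Hlt) as H.
  rewrite F_shift1, shift_commute_int in H. lra.
Qed.

Lemma iter_displacement_bounds x n :
  INR n * (F x - x - 1) <= Nat.iter n F 0 <= INR n * (F x - x + 1).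
Proof.
  induction n as [|n IH]; [simpl; lra|].
  rewrite S_INR. simpl Nat.iter.
  pose proof (displacement_lt_succ x (Nat.iter n F 0)).
  pose proof (displacement_lt_succ (Nat.iter n F 0) x).
  lra.
Qed.

Lemma translation_number_displacement t :
  translation_number F t -> forall x, t - 1 <= F x - x <= t + 1.
Proof.
  intros Ht x.
  enough (F x - x - 1 <= t <= F x - x + 1) by lra.
  apply (Un_cv_bounds _ _ _ _ Ht). intros n Hn.
  pose proof (iter_displacement_bounds x n).
  assert (Hn0 : 0 < INR n) by (apply lt_0_INR; lia).
  split; apply Rmult_le_reg_r with (INR n); try exact Hn0; unfold Rdiv;
    rewrite Rmult_assoc, Rinv_l by lra; lra.
Qed.

End LiftOfCircleMap.

Lemma Un_cv_of_dist_le_div (u : nat -> R) l C :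
  (forall n, (1 <= n)%nat -> Rabs (u n - l) <= C / INR n) -> Un_cv u l.
Proof.
  intros Hu eps Heps.
  destruct (INR_archimed eps C Heps) as [N HN].
  exists (S N). intros n Hn. unfold Rdist.
  assert (HnN : INR N < INR n) by (apply lt_INR; lia).
  assert (Hn0 : 0 < INR n) by (apply lt_0_INR; lia).
  apply Rle_lt_trans with (C / INR n); [apply Hu; lia|].
  apply Rmult_lt_reg_r with (INR n); [exact Hn0|].
  unfold Rdiv. rewrite Rmult_assoc, Rinv_l by lra. nra.
Qed.

Lemma Un_cv_ratio_of_bounded_defect (p : nat -> R) a b K :
  0 < a -> (forall n, Rabs (p n * a - INR n * b) <= K) ->
  Un_cv (fun n => p n / INR n) (/ a * b).
Proof.
  intros Ha Hdefect. apply Un_cv_of_dist_le_div with (K / a). intros n Hn.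
  assert (Hn0 : 0 < INR n) by (apply lt_0_INR; lia).
  replace (p n / INR n - / a * b) with ((p n * a - INR n * b) / (INR n * a)) by (field; lra).
  replace (K / a / INR n) with (K / (INR n * a)) by (field; lra).
  unfold Rdiv. rewrite Rabs_mult, Rabs_inv, (Rabs_pos_eq (INR n * a)) by nra.
  apply Rmult_le_compat_r; [left; apply Rinv_0_lt_compat; nra | apply Hdefect].
Qed.

Lemma Z_has_least (P : Z -> Prop) (L : Z) :
  (forall p, P p -> (L <= p)%Z) -> (exists p, P p) ->
  exists p, P p /\ forall q, P q -> (p <= q)%Z.
Proof.
  intros HL [p0 Hp0].
  destruct (dec_inh_nat_subset_has_unique_least_element
              (fun k => P (L + Z.of_nat k)%Z)) as [k [[Hk Hmin] _]].
  - intro k. apply classic.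
  - exists (Z.to_nat (p0 - L)). rewrite Z2Nat.id by (specialize (HL _ Hp0); lia).
    now rewrite Zplus_minus.
  - exists (L + Z.of_nat k)%Z. split; [exact Hk|].
    intros q Hq. specialize (HL _ Hq).
    assert (Hkq : (k <= Z.to_nat (q - L))%nat).
    { apply Hmin. rewrite Z2Nat.id by lia. now rewrite Zplus_minus. }
    lia.
Qed.

Definition lex_le {X : Type} (ev : X -> nat -> R) (u v : X) : Prop :=
  u = v \/ exists k, (forall j, (j < k)%nat -> ev u j = ev v j) /\ ev u k < ev v k.

Lemma lex_le_partial_order {X : Type} (ev : X -> nat -> R) : partial_order (lex_le ev).
Proof.
  split; [|split].
  - intro a. now left.
  - intros a b [Hab|[k [Hk Hlt]]] [Hba|[k' [Hk' Hlt']]]; auto.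
    exfalso. destruct (lt_eq_lt_dec k k') as [[Hc|Hc]|Hc].
    + rewrite (Hk' k Hc) in Hlt. lra.
    + subst. lra.
    + rewrite (Hk k' Hc) in Hlt'. lra.
  - intros a b c [Hab|[k [Hk Hlt]]] [Hbc|[k' [Hk' Hlt']]].
    + subst. now left.
    + subst. right. now exists k'.
    + subst. right. now exists k.
    + right. exists (Nat.min k k'). split.
      * intros j Hj. rewrite Hk, Hk'; auto; lia.
      * destruct (lt_eq_lt_dec k k') as [[Hc|Hc]|Hc].
        -- rewrite Nat.min_l, <- (Hk' k Hc) by lia. exact Hlt.
        -- subst. rewrite Nat.min_id. lra.
        -- rewrite Nat.min_r, (Hk k' Hc) by lia. exact Hlt'.
Qed.

Lemma lex_le_total {X : Type} (ev : X -> nat -> R) :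
  (forall u v, (forall k, ev u k = ev v k) -> u = v) -> total (lex_le ev).
Proof.
  intros ev_inj u v.
  destruct (classic (u = v)) as [Huv|Huv]; [left; now left|].
  assert (Hdiff : exists k, ev u k <> ev v k).
  { apply NNPP. intro Hn. apply Huv, ev_inj. intro k.
    apply NNPP. intro Hk. apply Hn. now exists k. }
  destruct (dec_inh_nat_subset_has_unique_least_element _ (fun k => classic _) Hdiff)
    as [k [[Hk Hmin] _]].
  assert (Hagree : forall j, (j < k)%nat -> ev u j = ev v j).
  { intros j Hj. apply NNPP. intro Hne. specialize (Hmin j Hne). lia. }
  destruct (Rlt_or_le (ev u k) (ev v k)).
  - left. right. now exists k.
  - right. right. exists k. split; [intros j Hj; symmetry; auto | lra].
Qed.

(* Enumerates the rationals: [k] is decoded by Cantor pairing into [(a, (b, c))]. *)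
Definition qpt (k : nat) : R :=
  let (a, r) := Cantor.of_nat k in let (b, c) := Cantor.of_nat r in
  (INR a - INR b) / INR (S c).

Lemma qpt_dense y d : 0 < d -> exists k, y < qpt k < y + d.
Proof.
  intro Hd.
  destruct (INR_archimed d 1 Hd) as [c Hc].
  set (C := INR (S c)).
  assert (HC : 0 < C) by (apply lt_0_INR; lia).
  assert (HCd : 1 < C * d) by (unfold C; rewrite S_INR; nra).
  set (m := (Zfloor (y * C) + 1)%Z).
  pose proof (Zfloor_bound (y * C)) as Hfl.
  assert (Hm : y * C < IZR m <= y * C + 1) by (unfold m; rewrite plus_IZR; lra).
  exists (Cantor.to_nat (Z.to_nat m, Cantor.to_nat (Z.to_nat (- m), c))).
  unfold qpt. rewrite !Cantor.cancel_of_to. fold C.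
  replace (INR (Z.to_nat m) - INR (Z.to_nat (- m))) with (IZR m).
  2:{ rewrite !INR_IZR_INZ. destruct (Z_le_gt_dec 0 m).
      - replace (Z.to_nat (- m)) with 0%nat by lia. rewrite Z2Nat.id by lia. simpl. lra.
      - replace (Z.to_nat m) with 0%nat by lia. rewrite Z2Nat.id, opp_IZR by lia. simpl. lra. }
  split; apply Rmult_lt_reg_r with C; auto; unfold Rdiv;
    rewrite Rmult_assoc, Rinv_l by lra; lra.
Qed.

Lemma continuous_eq_of_eq_on_qpt (F H : R -> R) :
  (forall x, continuity_pt F x) -> (forall x, continuity_pt H x) ->
  (forall k, F (qpt k) = H (qpt k)) -> forall x, F x = H x.
Proof.
  intros F_cont H_cont Hq x. apply NNPP. intro Hne.
  destruct (continuous_neq_0 (fun y => F y - H y) x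
              (continuity_pt_minus _ _ _ (F_cont x) (H_cont x)) ltac:(lra)) as [eps Heps].
  destruct (qpt_dense x eps (cond_pos eps)) as [k Hk].
  apply (Heps (qpt k - x)); [rewrite Rabs_right; lra|].
  replace (x + (qpt k - x)) with (qpt k) by ring. rewrite Hq. ring.
Qed.

Definition rmul {G : Type} (mul : G -> G -> G) (t x : G) : G := mul x t.

Lemma quasi_total_triple_of_total {X : Type} (le : X -> X -> Prop) (T : X -> X) :
  partial_order le -> total le -> dominant le T -> quasi_total_triple le T.
Proof.
  intros Hpo Htot Hdom. split; [exact Hpo | split; [exact Hdom|]].
  exists 1%nat. split; [lia|]. intros a b. exists 0%nat. split; [lia | apply Htot].
Qed.

Section HomogeneousQuasimorphism.

Context {G : Type}.
Variables (mul : G -> G -> G) (e : G) (inv : G -> G) (f : G -> R).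
Hypothesis HG : is_group mul e inv.
Hypothesis f_homog : forall g z, f (zpow mul e inv g z) = IZR z * f g.

Lemma npow_zpow g n : npow mul e g n = zpow mul e inv g (Z.of_nat n).
Proof. destruct n; [reflexivity|]. simpl. now rewrite SuccNat2Pos.id_succ. Qed.

Lemma f_npow g n : f (npow mul e g n) = INR n * f g.
Proof. now rewrite npow_zpow, f_homog, <- INR_IZR_INZ. Qed.

Lemma f_inv g : f (inv g) = - f g.
Proof.
  destruct HG as (_ & _ & mulg1 & _).
  pose proof (f_homog g (-1)%Z) as H. unfold npow in H. simpl in H. rewrite mulg1 in H. lra.
Qed.

Lemma central_inv z : central mul z -> central mul (inv z).
Proof.
  destruct HG as (mulA & mul1g & mulg1 & mulVg & mulgV).
  intros Hz g.
  rewrite <- (mulg1 (mul (inv z) g)), <- (mulgV z), mulA, <- (mulA (inv z) g z), <- Hz,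
    (mulA (inv z) z g), mulVg, mul1g. reflexivity.
Qed.

Lemma f_unbounded_above : (exists w, f w <> 0) -> forall M, exists g, M < f g.
Proof.
  intros [w Hw] M.
  assert (Hpos : exists h, 0 < f h).
  { destruct (Rlt_or_le 0 (f w)); [now exists w|].
    exists (inv w). rewrite f_inv. lra. }
  destruct Hpos as [h Hh].
  destruct (INR_archimed (f h) M Hh) as [n Hn].
  exists (npow mul e h n). now rewrite f_npow.
Qed.

Lemma central_unbounded_above :
  (forall M, exists z, central mul z /\ M < Rabs (f z)) ->
  forall M, exists z, central mul z /\ M < f z.
Proof.
  intros Hunb M. destruct (Hunb (Rabs M)) as [z [Hz Hfz]].
  destruct (Rle_or_lt 0 (f z)).
  - exists z. rewrite (Rabs_right (f z)) in Hfz by lra. split; [exact Hz|].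
    pose proof (Rle_abs M). lra.
  - exists (inv z). rewrite (Rabs_left (f z)) in Hfz by lra. rewrite f_inv.
    split; [now apply central_inv|]. pose proof (Rle_abs M). lra.
Qed.

(* The least [p] with [rel (h^n) (g^p)] satisfies [|p f(g) - n f(h)| <= D + f(g)]. *)
Lemma growth_multiples_of_coarse (rel : G -> G -> Prop) (D : R) :
  (exists w, f w <> 0) ->
  (forall u v, f u + D < f v -> rel u v) ->
  (forall u v, rel u v -> f u - D <= f v) ->
  growth_multiples_of mul e inv rel f.
Proof.
  intros f_nonzero rel_of_gap gap_of_rel g (_ & _ & g_dom).
  assert (fg_pos : 0 < f g).
  { apply Rnot_le_lt. intro Hle.
    destruct (f_unbounded_above f_nonzero D) as [h Hh].
    destruct (g_dom h) as [n Hn]. apply gap_of_rel in Hn.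
    rewrite f_npow in Hn. pose proof (pos_INR n). nra. }
  exists (/ f g). intro h.
  set (above n q := rel (npow mul e h n) (zpow mul e inv g q)).
  assert (above_lo : forall n q, above n q -> INR n * f h - D <= IZR q * f g).
  { intros n q Hq. apply gap_of_rel in Hq. now rewrite f_npow, f_homog in Hq. }
  assert (above_hi : forall n q, INR n * f h + D < IZR q * f g -> above n q).
  { intros n q Hq. apply rel_of_gap. now rewrite f_npow, f_homog. }
  assert (least : forall n, exists p, above n p /\ forall q, above n q -> (p <= q)%Z).
  { intro n. apply (Z_has_least _ (Zfloor ((INR n * f h - D) / f g))).
    - intros q Hq. rewrite <- (ZfloorZ q). apply Zfloor_le.
      apply above_lo in Hq. apply Rmult_le_reg_r with (f g); [exact fg_pos|].
      field_simplify; lra.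
    - exists (Zfloor ((INR n * f h + D) / f g) + 1)%Z. apply above_hi.
      pose proof (Zfloor_bound ((INR n * f h + D) / f g)) as [_ Hfl].
      rewrite plus_IZR. apply (Rmult_lt_compat_r (f g)) in Hfl; [|exact fg_pos].
      field_simplify in Hfl; lra. }
  destruct (choice _ least) as [p Hp].
  exists p. split; [exact Hp|].
  apply (Un_cv_ratio_of_bounded_defect (fun n => IZR (p n)) _ _ (D + f g) fg_pos).
  intro n. destruct (Hp n) as [Hpn Hmin]. apply Rabs_le. split.
  - apply above_lo in Hpn. lra.
  - apply Rnot_lt_le. intro Hgt.
    assert (Hprev : above n (p n - 1)%Z) by (apply above_hi; rewrite minus_IZR; lra).
    apply Hmin in Hprev. lia.
Qed.

End HomogeneousQuasimorphism.

Section CircularRepresentation.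

Context {G : Type}.
Variables (mul : G -> G -> G) (e : G) (inv : G -> G) (f : G -> R).
Variable phi : G -> R -> R.
Hypothesis HG : is_group mul e inv.
Hypothesis f_homog : forall g z, f (zpow mul e inv g z) = IZR z * f g.
Hypothesis f_nonzero : exists g, f g <> 0.
Hypothesis phi_homeo : forall g, homeo_plus_Z (phi g).
Hypothesis phi_mul : forall g h x, phi (mul g h) x = phi g (phi h x).
Hypothesis phi_inj : forall g h, (forall x, phi g x = phi h x) -> g = h.
Hypothesis phi_tn : forall g, translation_number (phi g) (f g).

Lemma phi_incr u x y : x < y -> phi u x < phi u y.
Proof. apply (phi_homeo u). Qed.

Lemma phi_displacement u x : f u - 1 <= phi u x - x <= f u + 1.
Proof.
  destruct (phi_homeo u) as (_ & _ & Hincr & Hshift).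
  exact (translation_number_displacement _ Hincr Hshift _ (phi_tn u) x).
Qed.

Definition phi_lt (u v : G) : Prop := forall y, phi u y < phi v y.

Definition phi_le (u v : G) : Prop := u = v \/ phi_lt u v.

Definition phi_lex : G -> G -> Prop := lex_le (fun u k => phi u (qpt k)).

Lemma phi_lt_of_f_gap u v : f u + 2 < f v -> phi_lt u v.
Proof.
  intros Hgap y. pose proof (phi_displacement u y). pose proof (phi_displacement v y). lra.
Qed.

Lemma phi_lt_irrefl u : ~ phi_lt u u.
Proof. intro H. specialize (H 0). lra. Qed.

(* Comparing [u] and [v] in the induced order reduces, through the increasing maps
   [phi k] and [phi x], to comparing [phi u] and [phi v], hence [f u] and [f v] up to 2. *)
Lemma growth_multiples_of_phi_lt_extension (le : G -> G -> Prop) :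
  partial_order le -> (forall u v, phi_lt u v -> le u v) ->
  growth_multiples_of mul e inv (induced_le mul le) f.
Proof.
  intros (_ & le_anti & _) le_of_lt.
  destruct HG as (_ & mul1g & mulg1 & _).
  apply (growth_multiples_of_coarse mul e inv f HG f_homog _ 2 f_nonzero).
  - intros u v Hgap k x. apply le_of_lt. intro y. rewrite !phi_mul.
    apply phi_incr, phi_lt_of_f_gap, Hgap.
  - intros u v Huv. apply Rnot_lt_le. intro Hgap.
    assert (Hvu : le v u) by (apply le_of_lt, phi_lt_of_f_gap; lra).
    specialize (Huv e e). rewrite !mul1g, !mulg1 in Huv.
    pose proof (le_anti _ _ Huv Hvu) as <-. lra.
Qed.

Lemma phi_le_partial_order : partial_order phi_le.
Proof.
  split; [|split].
  - intro a. now left.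
  - intros a b [Hab|Hab] [Hba|Hba]; auto.
    exfalso. apply (phi_lt_irrefl a). intro y. specialize (Hab y). specialize (Hba y). lra.
  - intros a b c [Hab|Hab] [Hbc|Hbc]; subst; try (now left); try (now right).
    right. intro y. specialize (Hab y). specialize (Hbc y). lra.
Qed.

Lemma phi_le_left_invariant : left_invariant mul phi_le.
Proof.
  intros k x y [<-|Hxy]; [now left|].
  right. intro z. rewrite !phi_mul. now apply phi_incr.
Qed.

Lemma phi_le_rmul t x y : phi_le x y -> phi_le (rmul mul t x) (rmul mul t y).
Proof.
  intros [<-|Hxy]; [now left|].
  right. intro z. unfold rmul. rewrite !phi_mul. apply Hxy.
Qed.

Lemma phi_lex_partial_order : partial_order phi_lex.
Proof. apply lex_le_partial_order. Qed.

Lemma phi_lex_total : total phi_lex.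
Proof.
  apply lex_le_total. intros u v Huv. apply phi_inj.
  destruct (phi_homeo u) as [Hu _]. destruct (phi_homeo v) as [Hv _].
  exact (continuous_eq_of_eq_on_qpt _ _ Hu Hv Huv).
Qed.

Lemma phi_lex_left_invariant : left_invariant mul phi_lex.
Proof.
  intros k x y [<-|[n [Hagree Hlt]]]; [now left|].
  right. exists n. cbv beta in *. split.
  - intros j Hj. rewrite !phi_mul. now rewrite (Hagree j Hj).
  - rewrite !phi_mul. now apply phi_incr.
Qed.

Lemma phi_lex_of_phi_lt u v : phi_lt u v -> phi_lex u v.
Proof. intro H. right. exists 0%nat. split; [intros; lia | apply H]. Qed.

Lemma phi_lex_of_phi_le u v : phi_le u v -> phi_lex u v.
Proof. intros [<-|H]; [now left | now apply phi_lex_of_phi_lt]. Qed.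

Lemma phi_iter_rmul t a n y :
  phi (Nat.iter n (rmul mul t) a) y = phi a (Nat.iter n (phi t) y).
Proof.
  revert y. induction n as [|n IH]; intro y; [reflexivity|].
  simpl. unfold rmul at 1. rewrite phi_mul, IH, <- Nat.iter_succ_r. reflexivity.
Qed.

Lemma phi_iter_lower t n y : y + INR n * (f t - 1) <= Nat.iter n (phi t) y.
Proof.
  induction n as [|n IH]; [simpl; lra|].
  rewrite S_INR. simpl Nat.iter. pose proof (phi_displacement t (Nat.iter n (phi t) y)). lra.
Qed.

Lemma phi_lt_iter_rmul t a b n :
  f a + 2 < f b + INR n * (f t - 1) -> phi_lt a (Nat.iter n (rmul mul t) b).
Proof.
  intros Hgap y. rewrite phi_iter_rmul.
  pose proof (phi_iter_lower t n y). pose proof (phi_displacement a y).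
  pose proof (phi_displacement b (Nat.iter n (phi t) y)). lra.
Qed.

Lemma dominant_rmul (le : G -> G -> Prop) t :
  (forall u v, phi_lt u v -> le u v) ->
  (forall x y, le x y -> le (rmul mul t x) (rmul mul t y)) ->
  2 < f t -> dominant le (rmul mul t).
Proof.
  destruct HG as (mulA & _ & mulg1 & mulVg & mulgV).
  intros le_of_lt le_rmul Ht. split; [split; [exact le_rmul|] |].
  - exists (rmul mul (inv t)). unfold rmul. split; intro x;
      rewrite <- mulA; [rewrite mulgV | rewrite mulVg]; apply mulg1.
  - intros a b.
    destruct (INR_archimed 1 (f b - f a + 2) Rlt_0_1) as [n Hn].
    assert (Hlt : phi_lt b (Nat.iter (S n) (rmul mul t) a)).
    { apply phi_lt_iter_rmul. rewrite S_INR. pose proof (pos_INR n). nra. }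
    exists (S n). split; [lia|]. split; [now apply le_of_lt|].
    intros Heq. rewrite <- Heq in Hlt. exact (phi_lt_irrefl _ Hlt).
Qed.

Lemma realizes_rmul (le : G -> G -> Prop) t :
  partial_order le -> (forall u v, phi_lt u v -> le u v) -> left_invariant mul le ->
  realizes mul e inv le (rmul mul t) f.
Proof.
  destruct HG as (mulA & mul1g & mulg1 & _).
  intros Hpo le_of_lt le_linv. split; [exact le_linv|]. split; [|split; [|split]].
  - intros g x. symmetry. apply mulA.
  - intros g Hg. rewrite <- (mulg1 g). apply Hg.
  - exists t, e, 1%nat. split; [lia|]. cbn. unfold rmul. rewrite mul1g, mulg1. apply Hpo.
  - now apply growth_multiples_of_phi_lt_extension.
Qed.

Lemma phi_le_quasi_total_triple t : 3 < f t -> quasi_total_triple phi_le (rmul mul t).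
Proof.
  intro Ht. split; [exact phi_le_partial_order|]. split.
  - apply dominant_rmul; [intros u v H; now right | apply phi_le_rmul | lra].
  - exists 1%nat. split; [lia|]. intros a b. exists 1%nat. split; [lia|].
    destruct (Rle_or_lt (f a) (f b)); [left | right]; right;
      apply phi_lt_iter_rmul; simpl INR; lra.
Qed.

End CircularRepresentation.

Theorem proposition4p6 (G : Type) (mul : G -> G -> G) (e : G) (inv : G -> G)
  (HG : is_group mul e inv) (f : G -> R) (Hf : circular mul e inv f) :
  (exists le : G -> G -> Prop,
      partial_order le /\ total le /\ left_invariant mul le /\
      growth_multiples_of mul e inv (induced_le mul le) f) /\
  (exists (le0 : G -> G -> Prop) (T : G -> G),
      quasi_total_triple le0 T /\ realizes mul e inv le0 T f /\
      exists le : G -> G -> Prop,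
        partial_order le /\ total le /\ left_invariant mul le /\ refines le0 le) /\
  ((forall M : R, exists z : G, central mul z /\ M < Rabs (f z)) ->
   exists (le : G -> G -> Prop) (T : G -> G),
     total_triple le T /\ realizes mul e inv le T f).
Proof.
  destruct Hf as [[_ f_homog] [f_nonzero [phi (phi_homeo & phi_mul & phi_inj & phi_tn)]]].
  assert (lex_order : partial_order (phi_lex phi) /\ total (phi_lex phi) /\
                      left_invariant mul (phi_lex phi))
    by exact (conj (phi_lex_partial_order phi) (conj (phi_lex_total phi phi_homeo phi_inj)
                (phi_lex_left_invariant mul phi phi_homeo phi_mul))).
  destruct lex_order as (lex_po & lex_total & lex_linv).
  pose proof (realizes_rmul mul e inv f phi HG f_homog f_nonzero phi_homeo phi_mul phi_tn)
    as realizes_le.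
  split; [|split].
  - exists (phi_lex phi). repeat (split; [assumption|]).
    exact (growth_multiples_of_phi_lt_extension mul e inv f phi HG f_homog f_nonzero
             phi_homeo phi_mul phi_tn _ lex_po (phi_lex_of_phi_lt phi)).
  - destruct (f_unbounded_above mul e inv f HG f_homog f_nonzero 3) as [t Ht].
    exists (phi_le phi), (rmul mul t). split; [|split].
    + exact (phi_le_quasi_total_triple mul e inv f phi HG phi_homeo phi_mul phi_tn t Ht).
    + apply realizes_le; [apply phi_le_partial_order | now right
                         | exact (phi_le_left_invariant mul phi phi_homeo phi_mul)].
    + exists (phi_lex phi). repeat (split; [assumption|]). exact (phi_lex_of_phi_le phi).
  - intro f_center_unbounded.
    destruct (central_unbounded_above mul e inv f HG f_homog f_center_unbounded 2)
      as [t [t_central Ht]].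
    exists (phi_lex phi), (rmul mul t).
    split; [|apply realizes_le; [exact lex_po | exact (phi_lex_of_phi_lt phi) | exact lex_linv]].
    split; [|exact lex_total]. apply quasi_total_triple_of_total; [exact lex_po | exact lex_total|].
    apply (dominant_rmul mul e inv f phi HG phi_homeo phi_mul phi_tn);
      [exact (phi_lex_of_phi_lt phi) | | exact Ht].
    intros x y Hxy. unfold rmul. rewrite <- !t_central. now apply lex_linv.
Qed.
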